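(* Let $m \geq 4$ and let $\Delta_m$ be the two-edge-coloured graph defined in the context. Then: (1) There exists a transversal graph $T$ of $\Delta_m$ such that no transversal graph of $\Delta_m$ is isomorphic, as an edge-coloured graph, to the edge-colour complement of $T$. (2) There is no permutation $\pi$ of the set of $4^m$ positive signed basis matrices that sends every amicable pair of basis matrices with disjoint support to an anti-amicable pair with disjoint support and every anti-amicable pair with disjoint support to an amicable pair with disjoint support; and the set of transversal graphs of $\Delta_m$ that are not isomorphic (as edge-coloured graphs) to their own edge-colour complement cannot be partitioned into pairs in which each member is isomorphic to the edge-colour complement of the other. (3) Among all $m' \geq 1$, the values for which there exists an automorphism of $\Delta_{m'}$ that swaps the red subgraph $\Delta_{m'}[-1]$ and the blue subgraph $\Delta_{m'}[1]$ are exactly $m' = 1, 2, 3$.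
   Context: Let $E_1 = \begin{pmatrix} 0 & -1 \\ 1 & 0\end{pmatrix}$ and $E_2 = \begin{pmatrix} 0 & 1 \\ 1 & 0 \end{pmatrix}$. The positive signed basis of the real monomial representation of the Clifford algebra $\mathbb{R}_{m,m}$ is the set of $4^m$ real monomial $2^m\times 2^m$ matrices $M_1\otimes M_2\otimes\cdots\otimes M_m$ with each $M_t \in \{I_2, E_1, E_2, E_1E_2\}$ (one fixed sign per such product). Two matrices have disjoint support if there is no position where both have a nonzero entry. Two orthogonal matrices $A,B$ are amicable if $AB^{-1}$ is symmetric and anti-amicable if $AB^{-1}$ is skew-symmetric. $\Delta_m$ is the graph whose vertices are the $4^m$ positive signed basis matrices, in which distinct $A,B$ are joined by a red edge (label $-1$) if they have disjoint support and are anti-amicable, by a blue edge (label $1$) if they have disjoint support and are amicable, and are not adjacent otherwise. $\Delta_m[-1]$ (resp. $\Delta_m[1]$) is the graph on the same vertex set with only the red (resp. blue) edges. A transversal graph of $\Delta_m$ is an induced subgraph of $\Delta_m$ that is a complete graph on $2^m$ vertices (with its edge colours). The edge-colour complement of an edge-coloured complete graph is obtained by swapping the colours red and blue on every edge. An automorphism of $\Delta_m$ swapping $\Delta_m[-1]$ and $\Delta_m[1]$ is a permutation of the vertices mapping red edges exactly onto blue edges and blue edges exactly onto red edges. *)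

From HB Require Import structures.
From mathcomp Require Import all_boot all_order all_algebra all_fingroup.
Set Implicit Arguments. Unset Strict Implicit. Unset Printing Implicit Defensive.
Import Order.TTheory GRing.Theory Num.Theory.
Local Open Scope ring_scope.

Definition E1 : 'M[int]_2 :=
  \matrix_(i < 2, j < 2) (if (val i == 0%N) && (val j == 1%N) then -1
                          else if (val i == 1%N) && (val j == 0%N) then 1 else 0).
Definition E2 : 'M[int]_2 :=
  \matrix_(i < 2, j < 2) (if val i != val j then 1 else 0).

Definition gen (k : 'I_4) : 'M[int]_2 :=
  match val k with
  | 0%N => 1%:M
  | 1%N => E1
  | 2%N => E2
  | _ => E1 *m E2
  end.

(* Index type of the positive signed basis of R_{m,m}: choices (M_1,...,M_m). *)
Definition Idx (m : nat) := {ffun 'I_m -> 'I_4}.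

(* t-th binary digit (t = 0 most significant) of a row/column index of a
   2^m x 2^m matrix, according to the Kronecker product ordering. *)
Definition kbit (m : nat) (t : 'I_m) (i : 'I_(2 ^ m)) : 'I_2 :=
  inord ((val i %/ 2 ^ (m - t.+1)) %% 2).

(* The basis matrix M_1 (x) M_2 (x) ... (x) M_m (Kronecker product, entrywise). *)
Definition basis (m : nat) (v : Idx m) : 'M[int]_(2 ^ m) :=
  \matrix_(i, j) \prod_(t < m) gen (v t) (kbit t i) (kbit t j).

Definition disjoint_support n (A B : 'M[int]_n) : bool :=
  [forall i, forall j, (A i j == 0) || (B i j == 0)].

Definition amicable n (A B : 'M[int]_n) : bool :=
  (A *m invmx B)^T == A *m invmx B.
Definition anti_amicable n (A B : 'M[int]_n) : bool :=
  (A *m invmx B)^T == - (A *m invmx B).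

Definition red (m : nat) (a b : Idx m) : bool :=
  [&& a != b, disjoint_support (basis a) (basis b) & anti_amicable (basis a) (basis b)].
Definition blue (m : nat) (a b : Idx m) : bool :=
  [&& a != b, disjoint_support (basis a) (basis b) & amicable (basis a) (basis b)].

Definition transversal_graph (m : nat) (S : {set Idx m}) : Prop :=
  #|S| = (2 ^ m)%N /\
  {in S &, forall a b, a != b -> red a b || blue a b}.

Definition col_iso (m : nat) (S S' : {set Idx m}) : Prop :=
  exists f : Idx m -> Idx m,
    [/\ {in S &, injective f}, f @: S = S' &
        {in S &, forall a b, red (f a) (f b) = red a b /\ blue (f a) (f b) = blue a b}].

Definition compl_iso (m : nat) (S S' : {set Idx m}) : Prop :=
  exists f : Idx m -> Idx m,
    [/\ {in S &, injective f}, f @: S = S' &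
        {in S &, forall a b, red (f a) (f b) = blue a b /\ blue (f a) (f b) = red a b}].

Definition swapping_perm (m : nat) (p : {perm Idx m}) : Prop :=
  forall a b, red (p a) (p b) = blue a b /\ blue (p a) (p b) = red a b.

Definition amicable_swapping (m : nat) (p : {perm Idx m}) : Prop :=
  forall a b, (blue a b -> red (p a) (p b)) /\ (red a b -> blue (p a) (p b)).

From HB Require Import structures.
From mathcomp Require Import all_boot all_order all_algebra all_fingroup.
From mathcomp Require Import zify.
Set Implicit Arguments. Unset Strict Implicit. Unset Printing Implicit Defensive.
Import GRing.Theory.

(* A basis matrix is a signed permutation matrix determined by two vectors
   x, z in F_2^m: it maps the row with binary digits i to the column i + x,
   and z governs the signs.  Two basis matrices have disjoint support iff
   their x-parts differ, and then they are anti-amicable if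
   Q(x + x', z + z') = 1 and amicable otherwise, where Q(x, z) = x.z.  So a
   transversal graph is the graph of a map h : F_2^m -> F_2^m, and it is
   entirely red iff (x + y).(h x + h y) = 1 for all x <> y.  Summing this
   identity over the pairs {0, v} with v in a plane P = {0, u, w, u + w}, and
   over the pairs {v, y} with v in P for a fixed y outside P, gives
   y.s = 1 for every y outside P, where s is the sum of h over P.  As y |-> y.s
   is linear, taking y1, y2 and y1 + y2 outside P (possible once m >= 4) gives
   1 + 1 = 1.  Hence the all-blue transversal of the unsigned basis matrices
   has no complementary transversal and no colour-swapping automorphism
   exists.  For m <= 3 such maps h exist, and (x, z) |-> (x, z + h x) swaps
   the colours. *)

Local Notation bvec m := {ffun 'I_m -> bool}.

Section BoolVectors.
Variable m : nat.
Implicit Types x y z : bvec m.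

Definition vzero : bvec m := [ffun => false].
Definition vadd x y : bvec m := [ffun t => x t (+) y t].
Definition bdot x y : bool := \big[addb/false]_(t < m) (x t && y t).

Lemma vadd0l : left_id vzero vadd.
Proof. by move=> x; apply/ffunP => t; rewrite !ffunE. Qed.

Lemma vaddC : commutative vadd.
Proof. by move=> x y; apply/ffunP => t; rewrite !ffunE addbC. Qed.

Lemma vaddACA : interchange vadd vadd.
Proof. by move=> x y z w; apply/ffunP => t; rewrite !ffunE addbACA. Qed.

Lemma vaddK y : cancel (vadd^~ y) (vadd^~ y).
Proof. by move=> x; apply/ffunP => t; rewrite !ffunE -addbA addbb addbF. Qed.

Lemma vadd_inj x : injective (vadd x).
Proof. by move=> y z; rewrite ![vadd x _]vaddC => /(can_inj (vaddK x)). Qed.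

Lemma vadd_eq_swap x y a b : (vadd x a == vadd y b) = (vadd y a == vadd x b).
Proof.
by apply/eqP/eqP => /ffunP E; apply/ffunP => t; move: (E t); rewrite !ffunE;
  case: (x t); case: (y t); case: (a t); case: (b t).
Qed.

Lemma bdotDl x y z : bdot (vadd x y) z = bdot x z (+) bdot y z.
Proof.
by rewrite /bdot -big_split; apply: eq_bigr => t _; rewrite ffunE andb_addl.
Qed.

Lemma bdotDr x y z : bdot x (vadd y z) = bdot x y (+) bdot x z.
Proof.
by rewrite /bdot -big_split; apply: eq_bigr => t _; rewrite ffunE andb_addr.
Qed.

Lemma bdot0l z : bdot vzero z = false.
Proof. by rewrite /bdot big1 // => t _; rewrite ffunE. Qed.

Lemma bdot0r x : bdot x vzero = false.
Proof. by rewrite /bdot big1 // => t _; rewrite ffunE andbF. Qed.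

Definition red_section (h : bvec m -> bvec m) : Prop :=
  forall x y, x != y -> bdot (vadd x y) (vadd (h x) (h y)).

Section RedSection.
Variables (h : bvec m -> bvec m) (hr : red_section h).

Lemma red_section_cross x y : y != x ->
  bdot y (h x) = ~~ (bdot x (h x) (+) bdot x (h y) (+) bdot y (h y)).
Proof.
rewrite eq_sym => /hr; rewrite bdotDl !bdotDr.
by case: (bdot x (h x)); case: (bdot x (h y)); case: (bdot y (h x)); case: (bdot y (h y)).
Qed.

Lemma red_section_plane u w : u != vzero -> w != vzero -> u != w ->
  bdot u (h u) (+) bdot w (h w) (+) bdot (vadd u w) (h (vadd u w)).
Proof.
move=> u0 w0 uw.
have uw0 : vadd u w != vzero.
  by apply: contra uw => /eqP E; rewrite -[u](vaddK w) E vadd0l.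
have diag v : v != vzero -> bdot v (h v) = ~~ bdot v (h vzero).
  by move/red_section_cross ->; rewrite !bdot0l negbK.
by rewrite !diag // bdotDl; case: (bdot u _); case: (bdot w _).
Qed.

Lemma red_section_off_plane u w y :
  y != vzero -> y != u -> y != w -> y != vadd u w ->
  bdot y (vadd (vadd (h vzero) (h u)) (vadd (h w) (h (vadd u w)))) =
  bdot u (h u) (+) bdot w (h w) (+) bdot (vadd u w) (h (vadd u w)).
Proof.
move=> y0 yu yw yuw.
rewrite !bdotDr (red_section_cross y0) (red_section_cross yu).
rewrite (red_section_cross yw) (red_section_cross yuw) !bdot0l [bdot (vadd u w) (h y)]bdotDl.
by case: (bdot y (h y)); case: (bdot u (h u)); case: (bdot w (h w));
  case: (bdot u (h y)); case: (bdot w (h y)); case: (bdot (vadd u w) _).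
Qed.

End RedSection.

Lemma no_red_section h : (4 <= m)%N -> ~ red_section h.
Proof.
move=> m4 hr; pose e k : bvec m := [ffun t => val t == k].
have neq_at x y t : x t != y t -> x != y.
  by apply: contra_neq => ->.
have ord k : (k < 4)%N -> {t : 'I_m | val t = k}.
  by move=> k4; exists (Ordinal (leq_trans k4 m4)).
move: (ord 0 isT) (ord 1 isT) (ord 2 isT) (ord 3 isT) => [t0 t0E] [t1 t1E] [t2 t2E] [t3 t3E].
have u0 : e 0 != vzero by apply: (neq_at _ _ t0); rewrite !ffunE t0E.
have w0 : e 1 != vzero by apply: (neq_at _ _ t1); rewrite !ffunE t1E.
have uw : e 0 != e 1 by apply: (neq_at _ _ t0); rewrite !ffunE t0E.
set s := vadd (vadd (h vzero) (h (e 0))) (vadd (h (e 1)) (h (vadd (e 0) (e 1)))).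
have off y t : y t -> (1 < val t)%N -> bdot y s.
  move=> yt t_gt1; have [t_ne0 t_ne1] : val t != 0 /\ val t != 1 by lia.
  rewrite (red_section_off_plane hr) ?(red_section_plane hr) //;
    by apply: (neq_at _ _ t); rewrite !ffunE yt ?(negbTE t_ne0) ?(negbTE t_ne1).
have off2 : bdot (e 2) s by apply: (off _ t2); rewrite ?ffunE t2E.
have off3 : bdot (e 3) s by apply: (off _ t3); rewrite ?ffunE t3E.
have : bdot (vadd (e 2) (e 3)) s by apply: (off _ t2); rewrite ?ffunE t2E.
by rewrite bdotDl off2 off3.
Qed.

End BoolVectors.

Definition vec n (s : seq bool) : bvec n := [ffun t : 'I_n => nth false s t].

Lemma vec_map n (x : bvec n) : x = vec n [seq x t | t <- enum 'I_n].
Proof.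
apply/ffunP => t; rewrite ffunE (nth_map t) ?size_enum_ord ?ltn_ord //.
by congr (x _); apply: val_inj; rewrite /= nth_enum_ord.
Qed.

(* The catch-all branch gives the identity, which serves m = 1.  For m = 3 no
   linear map works, since the quadratic form x.(A x) over F_2 has a nontrivial
   zero in three variables (Chevalley-Warning). *)
Definition small_red_section (s : seq bool) : seq bool :=
  match s with
  | [:: a; b] => [:: a (+) b; b]
  | [:: false; false; false] => [:: false; false; false]
  | [:: true; false; false] => [:: true; false; false]
  | [:: false; true; false] => [:: true; true; false]
  | [:: true; true; false] => [:: false; true; true]
  | [:: false; false; true] => [:: true; true; true]
  | [:: true; false; true] => [:: false; false; true]
  | [:: false; true; true] => [:: true; false; true]
  | [:: true; true; true] => [:: false; true; false]
  | _ => s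
  end.

Lemma red_section_small m : (0 < m <= 3)%N ->
  red_section (fun x : bvec m => vec m (small_red_section [seq x t | t <- enum 'I_m])).
Proof.
case: m => [|[|[|[|//]]]] // _ x y;
  rewrite (vec_map x) (vec_map y) !enum_ordSl enum_ord0 /=;
  rewrite /bdot !big_ord_recl big_ord0 !ffunE /=.
- by case: (x _); case: (y _); rewrite ?eqxx.
- by case: (x _); case: (x _); case: (y _); case: (y _); rewrite ?eqxx.
- by case: (x _); case: (x _); case: (x _); case: (y _); case: (y _); case: (y _);
    rewrite ?eqxx.
Qed.

Definition digit (r : 'I_2) : bool := val r == 1%N.
Definition gen_flip (k : 'I_4) : bool := (val k == 1%N) || (val k == 2%N).
Definition gen_sign (k : 'I_4) : bool := (val k == 1%N) || (val k == 3%N).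

Definition bits m (i : 'I_(2 ^ m)) : bvec m := [ffun t => digit (kbit t i)].

Lemma bitsE m (i : 'I_(2 ^ m)) t : bits i t = odd (i %/ 2 ^ (m - t.+1)).
Proof.
rewrite ffunE /digit /kbit -[val _]/(nat_of_ord _) inordK ?ltn_pmod // modn2.
by case: odd.
Qed.

Lemma eq_from_digits n a b : (a < 2 ^ n)%N -> (b < 2 ^ n)%N ->
  (forall e, (e < n)%N -> odd (a %/ 2 ^ e) = odd (b %/ 2 ^ e)) -> a = b.
Proof.
elim: n a b => [|n IH] a b ha hb H; first by rewrite expn0 in ha hb; lia.
have h0 : odd a = odd b by have := H 0%N isT; rewrite expn0 !divn1.
have hq : a %/ 2 = b %/ 2.
  apply: IH; rewrite ?ltn_divLR -?expnSr // => e he.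
  by rewrite -!divnMA -expnS; apply: H.
by rewrite (divn_eq a 2) (divn_eq b 2) !modn2 h0 hq.
Qed.

Lemma bits_inj m : injective (@bits m).
Proof.
move=> i j /ffunP E; apply/val_inj/(eq_from_digits (ltn_ord i) (ltn_ord j)) => e he.
have ht : (m - e.+1 < m)%N by lia.
have := E (Ordinal ht); rewrite !bitsE /=.
by have -> : (m - (m - e.+1).+1 = e)%N by lia.
Qed.

Lemma bits_onto m (x : bvec m) : exists i, bits i = x.
Proof.
have card_le : (#|{ffun 'I_m -> bool}| <= #|'I_(2 ^ m)|)%N.
  by rewrite card_ffun card_bool !card_ord.
by case/codomP: (inj_card_onto (@bits_inj m) card_le x) => i ->; exists i.
Qed.

Local Open Scope ring_scope.

Definition sg (b : bool) : int := if b then -1 else 1.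

Lemma sgD : {morph sg : a b / a (+) b >-> a * b}.
Proof. by move=> [] []; rewrite /sg ?mulN1r ?mulr1 ?opprK. Qed.

Lemma sgN b : sg (~~ b) = - sg b.
Proof. by case: b; rewrite /sg ?opprK. Qed.

Lemma sg_inj : injective sg.
Proof. by move=> [] []. Qed.

Lemma sg_neq0 b : sg b != 0.
Proof. by case: b. Qed.

Lemma genE k r s :
  gen k r s = if digit s == digit r (+) gen_flip k then sg (gen_sign k && ~~ digit r) else 0.
Proof.
case: k => [[|[|[|[|k]]]] Hk] //; case: r => [[|[|r]] Hr] //; case: s => [[|[|s]] Hs] //;
  by rewrite /gen /= ?mxE /= ?big_ord_recl ?big_ord0 /= ?mxE.
Qed.

Definition flips m (v : Idx m) : bvec m := [ffun t => gen_flip (v t)].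
Definition signs m (v : Idx m) : bvec m := [ffun t => gen_sign (v t)].
Definition row_sign m (v : Idx m) (i : 'I_(2 ^ m)) : bool :=
  \big[addb/false]_(t < m) (gen_sign (v t) && ~~ bits i t).

Lemma basisE m (v : Idx m) i j :
  basis v i j = if bits j == vadd (bits i) (flips v) then sg (row_sign v i) else 0.
Proof.
rewrite mxE; case: eqP => [/ffunP E | /eqP ne].
  rewrite /row_sign (big_morph sg sgD (erefl (sg false))); apply: eq_bigr => t _.
  by move: (E t); rewrite genE !ffunE => ->; rewrite eqxx.
have [t Ht] : exists t, bits j t != vadd (bits i) (flips v) t.
  apply/existsP; rewrite -negb_forall; apply: contra ne => /forallP H.
  by apply/eqP/ffunP => t; apply/eqP/H.
by move: Ht; rewrite (bigD1 t) //= genE !ffunE => /negbTE ->; rewrite mul0r.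
Qed.

Lemma basis_mul_trE m (a b : Idx m) i j :
  (basis a *m (basis b)^T) i j =
  if vadd (bits i) (flips a) == vadd (bits j) (flips b)
  then sg (row_sign a i (+) row_sign b j) else 0.
Proof.
have [k Ek] := bits_onto (vadd (bits i) (flips a)).
rewrite mxE (bigD1 k) //= big1 ?addr0 => [|l kl]; last first.
  rewrite basisE; case: eqP => [El|]; last by rewrite mul0r.
  by case/eqP: kl; apply: bits_inj; rewrite Ek El.
by rewrite basisE [_^T _ _]mxE basisE Ek eqxx; case: eqP; rewrite ?mulr0 // sgD.
Qed.

Lemma basis_mul_tr_id m (v : Idx m) : basis v *m (basis v)^T = 1%:M.
Proof.
apply/matrixP => i j; rewrite basis_mul_trE mxE (can_eq (vaddK _)) (inj_eq (@bits_inj m)).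
by case: eqP => [->|]; rewrite ?addbb.
Qed.

Lemma invmx_basis m (v : Idx m) : invmx (basis v) = (basis v)^T.
Proof.
have [v_unit _] := mulmx1_unit (basis_mul_tr_id v).
by rewrite -[RHS](mulKmx v_unit) basis_mul_tr_id mulmx1.
Qed.

Definition skewb m (a b : Idx m) : bool :=
  bdot (vadd (flips a) (flips b)) (vadd (signs a) (signs b)).

Lemma row_sign_swap m (a b : Idx m) i j :
  vadd (bits i) (flips a) = vadd (bits j) (flips b) ->
  (row_sign a i (+) row_sign b j) (+) (row_sign a j (+) row_sign b i) = skewb a b.
Proof.
move/ffunP => E; rewrite /row_sign /skewb /bdot -!big_split; apply: eq_bigr => t _ /=.
move: (E t); rewrite !ffunE.
by case: (digit (kbit t i)); case: (digit (kbit t j));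
  case: (gen_flip (a t)); case: (gen_flip (b t)); case: (gen_sign (a t)); case: (gen_sign (b t)).
Qed.

Lemma matching_rows m (a b : Idx m) :
  exists i j, vadd (bits i) (flips a) = vadd (bits j) (flips b).
Proof.
have [i _] := bits_onto (vzero m).
have [j Ej] := bits_onto (vadd (vadd (bits i) (flips a)) (flips b)).
by exists i, j; rewrite Ej vaddK.
Qed.

Lemma amicable_basis m (a b : Idx m) : amicable (basis a) (basis b) = ~~ skewb a b.
Proof.
rewrite /amicable invmx_basis; apply/eqP/idP => [sym | skew_ab].
  have [i [j Eij]] := matching_rows a b.
  have := congr1 (fun M : 'M_(2 ^ m) => M j i) sym; rewrite /= mxE !basis_mul_trE.
  rewrite (vadd_eq_swap (bits j)) Eij eqxx => /sg_inj E.
  by rewrite -(row_sign_swap Eij) E addbb.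
apply/matrixP => i j; rewrite mxE !basis_mul_trE (vadd_eq_swap (bits j)).
case: eqP => // /row_sign_swap; rewrite (negbTE skew_ab).
by move: (row_sign a i (+) row_sign b j) (row_sign a j (+) row_sign b i) => [] [].
Qed.

Lemma anti_amicable_basis m (a b : Idx m) : anti_amicable (basis a) (basis b) = skewb a b.
Proof.
rewrite /anti_amicable invmx_basis; apply/eqP/idP => [skew | skew_ab].
  have [i [j Eij]] := matching_rows a b.
  have := congr1 (fun M : 'M_(2 ^ m) => M j i) skew.
  rewrite /= mxE [X in _ = X]mxE !basis_mul_trE.
  rewrite (vadd_eq_swap (bits j)) Eij eqxx -sgN => /sg_inj E.
  by rewrite -(row_sign_swap Eij) E addNb addbb.
apply/matrixP => i j; rewrite mxE [X in _ = X]mxE !basis_mul_trE (vadd_eq_swap (bits j)).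
case: eqP => [/row_sign_swap|]; last by rewrite oppr0.
rewrite skew_ab -sgN.
by move: (row_sign a i (+) row_sign b j) (row_sign a j (+) row_sign b i) => [] [].
Qed.

Lemma disjoint_support_basis m (a b : Idx m) :
  disjoint_support (basis a) (basis b) = (flips a != flips b).
Proof.
apply/forallP/idP => [disj | ne i]; last first.
  apply/forallP => j; rewrite !basisE.
  case: ifP => [/eqP Ea|_]; case: ifP => [/eqP Eb|_]; rewrite ?eqxx ?orbT //.
  by move: ne; rewrite Ea in Eb; rewrite (vadd_inj Eb) eqxx.
apply/eqP => E; have [i _] := bits_onto (vzero m).
have [j Ej] := bits_onto (vadd (bits i) (flips a)).
by move: (forallP (disj i) j); rewrite !basisE Ej -E eqxx !(negbTE (sg_neq0 _)).
Qed.

Lemma redE m (a b : Idx m) : red a b = (flips a != flips b) && skewb a b.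
Proof.
rewrite /red disjoint_support_basis anti_amicable_basis.
by case: (eqVneq a b) => [->|]; rewrite ?eqxx.
Qed.

Lemma blueE m (a b : Idx m) : blue a b = (flips a != flips b) && ~~ skewb a b.
Proof.
rewrite /blue disjoint_support_basis amicable_basis.
by case: (eqVneq a b) => [->|]; rewrite ?eqxx.
Qed.

Definition gen_of (x z : bool) : 'I_4 :=
  if x then (if z then @Ordinal 4 1 isT else @Ordinal 4 2 isT)
  else (if z then @Ordinal 4 3 isT else @Ordinal 4 0 isT).

Lemma gen_flip_of x z : gen_flip (gen_of x z) = x.
Proof. by case: x; case: z. Qed.

Lemma gen_sign_of x z : gen_sign (gen_of x z) = z.
Proof. by case: x; case: z. Qed.

Lemma gen_ofK k : gen_of (gen_flip k) (gen_sign k) = k.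
Proof. by apply: val_inj; case: k => [[|[|[|[|k]]]] Hk]. Qed.

Definition vertex m (x z : bvec m) : Idx m := [ffun t => gen_of (x t) (z t)].

Lemma flips_vertex m (x z : bvec m) : flips (vertex x z) = x.
Proof. by apply/ffunP => t; rewrite !ffunE gen_flip_of. Qed.

Lemma signs_vertex m (x z : bvec m) : signs (vertex x z) = z.
Proof. by apply/ffunP => t; rewrite !ffunE gen_sign_of. Qed.

Lemma vertexK m (v : Idx m) : vertex (flips v) (signs v) = v.
Proof. by apply/ffunP => t; rewrite !ffunE gen_ofK. Qed.

Section Shear.
Variables (m : nat) (h : bvec m -> bvec m).

Definition shear (v : Idx m) : Idx m := vertex (flips v) (vadd (signs v) (h (flips v))).

Lemma flips_shear v : flips (shear v) = flips v.
Proof. exact: flips_vertex. Qed.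

Lemma shearK : involutive shear.
Proof. by move=> v; rewrite {1}/shear flips_shear /shear signs_vertex vaddK vertexK. Qed.

Lemma skewb_shear a b : skewb (shear a) (shear b) =
  skewb a b (+) bdot (vadd (flips a) (flips b)) (vadd (h (flips a)) (h (flips b))).
Proof. by rewrite /skewb !flips_shear !signs_vertex vaddACA bdotDr. Qed.

Lemma swapping_perm_shear : red_section h -> swapping_perm (perm (can_inj shearK)).
Proof.
move=> hr a b; rewrite !permE !redE !blueE !flips_shear skewb_shear.
case: (eqVneq (flips a) (flips b)) => [//|ne] /=.
by rewrite (hr _ _ ne) addbT negbK.
Qed.

End Shear.

Lemma red_section_of_red_clique m (S : {set Idx m}) : #|S| = (2 ^ m)%N ->
  {in S &, forall a b, a != b -> red a b} -> exists h : bvec m -> bvec m, red_section h.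
Proof.
move=> cardS redS.
have flips_inj : {in S &, injective (@flips m)}.
  move=> a b aS bS Eab; case: (eqVneq a b) => // ab.
  by move: (redS a b aS bS ab); rewrite redE Eab eqxx.
have flips_onto x : exists v, v \in S /\ flips v = x.
  have : x \in @flips m @: S.
    suff -> : @flips m @: S = setT by rewrite inE.
    apply/eqP; rewrite eqEcard subsetT cardsT card_ffun card_bool card_ord.
    by rewrite card_in_imset // cardS leqnn.
  by case/imsetP => v vS ->; exists v.
have [g gP] := fin_all_exists flips_onto.
exists (fun x => signs (g x)) => x y xy.
have [[gxS gxE] [gyS gyE]] := (gP x, gP y).
have : red (g x) (g y).
  by apply: redS => //; apply: contra_neq xy => E; rewrite -gxE -gyE E.
by rewrite redE /skewb gxE gyE => /andP [].
Qed.

Definition unsigned_transversal m : {set Idx m} := [set vertex x (vzero m) | x : bvec m].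

Lemma card_unsigned_transversal m : #|unsigned_transversal m| = (2 ^ m)%N.
Proof.
rewrite card_imset ?card_ffun ?card_bool ?card_ord //.
by move=> x y /(congr1 (@flips m)); rewrite !flips_vertex.
Qed.

Lemma unsigned_transversal_blue m :
  {in unsigned_transversal m &, forall a b, a != b -> blue a b}.
Proof.
move=> _ _ /imsetP [x _ ->] /imsetP [y _ ->] ne.
rewrite blueE /skewb !flips_vertex !signs_vertex vadd0l bdot0r andbT.
by apply: contra_neq ne => ->.
Qed.

Lemma transversal_unsigned m : transversal_graph (unsigned_transversal m).
Proof.
split; first exact: card_unsigned_transversal.
by move=> a b aS bS ab; rewrite unsigned_transversal_blue ?orbT.
Qed.

Lemma no_blue_to_red m (f : Idx m -> Idx m) : (4 <= m)%N ->
  {in unsigned_transversal m &, injective f} ->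
  ~ {in unsigned_transversal m &, forall a b, blue a b -> red (f a) (f b)}.
Proof.
move=> m4 f_inj f_red.
have [h hr] : exists h : bvec m -> bvec m, red_section h.
  apply: (@red_section_of_red_clique _ (f @: unsigned_transversal m)).
    by rewrite card_in_imset // card_unsigned_transversal.
  move=> _ _ /imsetP [a aS ->] /imsetP [b bS ->] ne.
  apply: f_red => //; apply: unsigned_transversal_blue => //.
  by apply: contra_neq ne => ->.
exact: no_red_section m4 hr.
Qed.

Lemma unsigned_transversal_no_compl m (S : {set Idx m}) : (4 <= m)%N ->
  ~ compl_iso (unsigned_transversal m) S.
Proof.
move=> m4 [f [f_inj _ f_col]]; apply: (no_blue_to_red m4 f_inj) => a b aS bS.
by case: (f_col a b aS bS) => ->.
Qed.

Definition complement_pairing m (P : {set {set {set Idx m}}}) : Prop :=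
  (forall S : {set Idx m}, S \in cover P <-> (transversal_graph S /\ ~ compl_iso S S)) /\
  trivIset P /\
  forall B, B \in P -> #|B| = 2%N /\ {in B &, forall S S', S != S' -> compl_iso S S'}.

Lemma no_complement_pairing m (S : {set Idx m}) :
  transversal_graph S -> (forall S', ~ compl_iso S S') ->
  ~ exists P : {set {set {set Idx m}}}, complement_pairing P.
Proof.
move=> S_tr S_nc [P [coverP [_ pairP]]].
have : S \in cover P by apply/coverP; split=> //; apply: S_nc.
case/bigcupP => B BP SB; have [cardB compl_pairs] := pairP B BP.
have : (0 < #|B :\ S|)%N by move: cardB; rewrite (cardsD1 S B) SB add1n => -[->].
case/card_gt0P => S' /setD1P [S'S S'B].
by apply: (S_nc S'); apply: compl_pairs; rewrite // eq_sym.
Qed.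

Theorem theorem3 :
  (forall m : nat, (4 <= m)%N ->
     (* (1) *)
     (exists S : {set Idx m}, transversal_graph S /\
        forall S' : {set Idx m}, transversal_graph S' -> ~ compl_iso S S') /\
     (* (2a) *)
     (~ exists p : {perm Idx m}, amicable_swapping p) /\
     (* (2b) *)
     (~ exists P : {set {set {set Idx m}}},
          (forall S : {set Idx m},
             S \in cover P <-> (transversal_graph S /\ ~ compl_iso S S)) /\
          trivIset P /\
          forall B, B \in P -> #|B| = 2%N /\
            {in B &, forall S S', S != S' -> compl_iso S S'})) /\
  (* (3) *)
  (forall m' : nat, (1 <= m')%N ->
     ((exists p : {perm Idx m'}, swapping_perm p) <-> (m' <= 3)%N)).
Proof.
split=> [m m4 | m m_gt0].
  have no_compl := @unsigned_transversal_no_compl m _ m4.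
  split; [|split].
  - exists (unsigned_transversal m); split=> [|S' _]; first exact: transversal_unsigned.
    exact: no_compl.
  - case=> p p_swap; apply: (no_blue_to_red m4 (f := p)) => [a b _ _|a b _ _].
      exact: perm_inj.
    by case: (p_swap a b).
  - exact: no_complement_pairing (transversal_unsigned m) no_compl.
split=> [[p p_swap] | m3].
  rewrite leqNgt; apply/negP => m4; apply: (no_blue_to_red m4 (f := p)) => [a b _ _|a b _ _].
    exact: perm_inj.
  by case: (p_swap a b) => ->.
by eexists; apply/swapping_perm_shear/red_section_small; rewrite m_gt0.
Qed.
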